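(* Consider two runs $k=1,2$ of the dual opinions dynamics described in the context. Run $k$ takes place on an $(n,n,p_s^{(k)},p_d^{(k)})$-two-island network with groups $V_1,V_2$ and degree of homophily $h^{(k)}=p_s^{(k)}/p_d^{(k)}$, with common resilience $\phi^{(k)}\in(0,1)$, common bias parameter $b^{(k)}>0$, and the symmetric initial condition $x_i^{(k)}(0)=x_0\in(\tfrac12,1)$, $y_i^{(k)}(0)=y_0^{(k)}\in[\tfrac12,x_0]$ for $i\in V_1$ and $x_j^{(k)}(0)=1-x_0$, $y_j^{(k)}(0)=1-y_0^{(k)}$ for $j\in V_2$ (in particular both runs have the same initial implicit opinions). Suppose $y_0^{(1)}>y_0^{(2)}$, $\phi^{(1)}>\phi^{(2)}$, $b^{(1)}>b^{(2)}$ and $h^{(1)}>h^{(2)}$. Then for every $t>0$ and every $i\in V_1$, $$x_i^{(1)}(t)\ge x_i^{(2)}(t)\quad\text{and}\quad y_i^{(1)}(t)\ge y_i^{(2)}(t).$$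
   Context: Let $n\ge 1$ and $p_s,p_d\in(0,1)$ with $p_s>p_d$ and $np_s,np_d$ positive integers. An $(n,n,p_s,p_d)$-two-island network is an undirected graph (no self-loops) with vertex set $V=V_1\cup V_2$, $V_1\cap V_2=\emptyset$, $|V_1|=|V_2|=n$, such that each node of $V_1$ has exactly $np_s$ neighbours in $V_1$ and $np_d$ neighbours in $V_2$, and each node of $V_2$ has exactly $np_s$ neighbours in $V_2$ and $np_d$ neighbours in $V_1$. Its degree of homophily is $p_s/p_d>1$. Let $w_{ij}\in\{0,1\}$ be the adjacency matrix, $N_i$ the set of neighbours of $i$, and $d_i=\sum_{j\in N_i}w_{ij}$. Dual opinions dynamics with parameters $b>0$, $\phi\in(0,1)$: each individual $i\in V$ has an implicit opinion $x_i(t)\in[0,1]$ and an explicit opinion $y_i(t)\in[0,1]$, $t=0,1,2,\dots$, updated by $$x_i(t+1)=\frac{x_i(t)^{b}s_i(t)}{x_i(t)^{b}s_i(t)+(1-x_i(t))^{b}(d_i-s_i(t))},\qquad y_i(t+1)=\phi\, x_i(t+1)+(1-\phi)\hat y_{i,avg}(t),$$ where $s_i(t)=\sum_{j\in N_i}w_{ij}y_j(t)$ and $\hat y_{i,avg}(t)=\sum_{j\in N_i}\frac{w_{ij}}{d_i}y_j(t)$. *)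

From HB Require Import structures.
From mathcomp Require Import all_boot all_order all_algebra.
From mathcomp Require Import reals exp.
Set Implicit Arguments. Unset Strict Implicit. Unset Printing Implicit Defensive.
Import Order.TTheory GRing.Theory Num.Theory.
Local Open Scope ring_scope.

Section DualOpinions.
Variable R : realType.
Variable V : finType.

Definition nbrs (e : rel V) (i : V) : {set V} := [set j | e i j].

Definition deg (e : rel V) (i : V) : R := (#|nbrs e i|)%:R.

Definition ssum (e : rel V) (y : V -> R) (i : V) : R := \sum_(j in nbrs e i) y j.

Definition two_island (n : nat) (ps pd : R) (V1 V2 : {set V}) (e : rel V) : Prop :=
  [/\ symmetric e, irreflexive e,
      [/\ V1 :&: V2 = set0, V1 :|: V2 = [set: V], #|V1| = n & #|V2| = n],
      (forall i, i \in V1 ->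
         (#|V1 :&: nbrs e i|)%:R = n%:R * ps /\ (#|V2 :&: nbrs e i|)%:R = n%:R * pd)
    & (forall i, i \in V2 ->
         (#|V2 :&: nbrs e i|)%:R = n%:R * ps /\ (#|V1 :&: nbrs e i|)%:R = n%:R * pd)].

Definition step (b phi : R) (e : rel V) (xy : (V -> R) * (V -> R)) : (V -> R) * (V -> R) :=
  let x := xy.1 in let y := xy.2 in
  let x' := fun i =>
    (powR (x i) b * ssum e y i) /
    (powR (x i) b * ssum e y i + powR (1 - x i) b * (deg e i - ssum e y i)) in
  (x', fun i => phi * x' i + (1 - phi) * (ssum e y i / deg e i)).

Definition traj (b phi : R) (e : rel V) (x0 y0 : V -> R) (t : nat) : (V -> R) * (V -> R) :=
  iter t (step b phi e) (x0, y0).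

End DualOpinions.

From HB Require Import structures.
From mathcomp Require Import all_boot all_order all_algebra.
From mathcomp Require Import reals exp boolp.
From mathcomp Require Import ring lra.

Set Implicit Arguments.
Unset Strict Implicit.
Unset Printing Implicit Defensive.

Import Order.TTheory GRing.Theory Num.Theory.
Local Open Scope ring_scope.

(* A state that is constant on each island, with the values on V2 the
   complements of those on V1, stays of this form: every node of V1 sees the
   same supporting fraction m = w y + (1 - w) (1 - y) of its neighbours, where
   w = p_s / (p_s + p_d), and the update commutes with x |-> 1 - x.  Each run
   thus reduces to iterating the planar map
     (x, y) |-> (g, phi g + (1 - phi) m),  g = x^b m / (x^b m + (1 - x)^b (1 - m)),
   which keeps x and y in [1/2, 1] and is monotone there in the state and in
   b, phi and w. *)

Section ReducedDynamics.
Variable R : realType.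
Implicit Types (b phi w x y m : R) (p q : R * R).

Lemma ler_div_cross (a b c d : R) : 0 < c -> 0 < d -> a * d <= b * c -> a / c <= b / d.
Proof. by move=> c0 d0; rewrite ler_pdivlMr // mulrAC ler_pdivrMr. Qed.

Lemma powR_odds_le b1 b2 x1 x2 : 0 < b2 -> b2 <= b1 -> 2^-1 <= x2 -> x2 <= x1 -> x1 <= 1 ->
  powR x2 b2 * powR (1 - x1) b1 <= powR x1 b1 * powR (1 - x2) b2.
Proof.
move=> b20 b21 x2h x21 x11.
have powR_homo (r u v : R) : 0 <= r -> 0 <= u -> u <= v -> powR u r <= powR v r.
  by move=> r0 u0 uv; apply: ge0_ler_powR; rewrite ?nnegrE //; lra.
have powR_split u : powR u b1 = powR u b2 * powR u (b1 - b2).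
  by rewrite -powRD ?subrKC // implybE gt_eqF ?orbT //; lra.
have odds_b2 : powR x2 b2 * powR (1 - x1) b2 <= powR x1 b2 * powR (1 - x2) b2.
  by rewrite -!powRM; try lra; apply: powR_homo; nra.
have odds_diff : powR (1 - x1) (b1 - b2) <= powR x1 (b1 - b2) by apply: powR_homo; lra.
rewrite !powR_split mulrA [leRHS]mulrAC.
by apply: ler_pM; rewrite ?mulr_ge0 ?powR_ge0.
Qed.

Definition bias_update b x m : R :=
  powR x b * m / (powR x b * m + powR (1 - x) b * (1 - m)).

Lemma bias_update_denom_gt0 b x m : 0 < x -> 0 < m -> m <= 1 ->
  0 < powR x b * m + powR (1 - x) b * (1 - m).
Proof.
move=> x0 m0 m1; rewrite ltr_wpDr ?mulr_gt0 ?powR_gt0 //.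
by rewrite mulr_ge0 ?powR_ge0 ?subr_ge0.
Qed.

Lemma bias_update_ge b x m : 0 <= b -> 2^-1 <= x -> x <= 1 -> 0 < m -> m <= 1 ->
  m <= bias_update b x m.
Proof.
move=> b0 xh x1 m0 m1.
have x0 : 0 < x by lra.
have D0 := @bias_update_denom_gt0 b x m x0 m0 m1.
have odds : powR (1 - x) b <= powR x b by apply: ge0_ler_powR; rewrite ?nnegrE //; lra.
have : 0 <= m * (1 - m) * (powR x b - powR (1 - x) b) by rewrite !mulr_ge0 //; lra.
by rewrite /bias_update ler_pdivlMr //; nra.
Qed.

Lemma bias_update_le1 b x m : 0 < x -> 0 < m -> m <= 1 -> bias_update b x m <= 1.
Proof.
move=> x0 m0 m1; have D0 := @bias_update_denom_gt0 b x m x0 m0 m1.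
rewrite /bias_update ler_pdivrMr // mul1r lerDl.
by rewrite mulr_ge0 ?powR_ge0 ?subr_ge0.
Qed.

Lemma bias_update_le_homo b1 b2 x1 x2 m1 m2 :
  0 < b2 -> b2 <= b1 -> 2^-1 <= x2 -> x2 <= x1 -> x1 <= 1 -> 0 < m2 -> m2 <= m1 -> m1 <= 1 ->
  bias_update b2 x2 m2 <= bias_update b1 x1 m1.
Proof.
move=> b20 b21 x2h x21 x11 m20 m21 m11.
have odds := powR_odds_le b20 b21 x2h x21 x11.
have odds_m : m2 * (1 - m1) <= m1 * (1 - m2) by lra.
have [x10 x20 m10 m2le1] : [/\ 0 < x1, 0 < x2, 0 < m1 & m2 <= 1] by split; lra.
have D1 := @bias_update_denom_gt0 b1 x1 m1 x10 m10 m11.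
have D2 := @bias_update_denom_gt0 b2 x2 m2 x20 m20 m2le1.
have m2m1 : 0 <= m2 * (1 - m1) by rewrite mulr_ge0 //; lra.
have := ler_pM (mulr_ge0 (powR_ge0 _ _) (powR_ge0 _ _)) m2m1 odds odds_m.
by rewrite /bias_update => H; apply: ler_div_cross => //; lra.
Qed.

Lemma bias_update_compl b x m : 0 < x -> 0 < m -> m <= 1 ->
  bias_update b (1 - x) (1 - m) = 1 - bias_update b x m.
Proof.
move=> x0 m0 m1; have D0 := @bias_update_denom_gt0 b x m x0 m0 m1.
rewrite /bias_update !subKr [_ + powR x b * m]addrC.
by field; rewrite gt_eqF.
Qed.

Definition opinion_update b phi x m : R * R :=
  let x' := bias_update b x m in (x', phi * x' + (1 - phi) * m).

Lemma opinion_update_compl b phi x m : 0 < x -> 0 < m -> m <= 1 ->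
  opinion_update b phi (1 - x) (1 - m) =
  (1 - (opinion_update b phi x m).1, 1 - (opinion_update b phi x m).2).
Proof. by move=> x0 m0 m1; rewrite /opinion_update bias_update_compl //=; congr pair; ring. Qed.

Definition island_mean w y : R := w * y + (1 - w) * (1 - y).

Lemma island_mean_compl w y : island_mean w (1 - y) = 1 - island_mean w y.
Proof. by rewrite /island_mean; ring. Qed.

Lemma island_mean_ge w y : 2^-1 <= w -> 2^-1 <= y -> 2^-1 <= island_mean w y.
Proof. by move=> wh yh; rewrite /island_mean; nra. Qed.

Lemma island_mean_le w y : w <= 1 -> 2^-1 <= y -> island_mean w y <= y.
Proof. by move=> w1 yh; rewrite /island_mean; nra. Qed.

Lemma island_mean_le_homo w1 w2 y1 y2 : 2^-1 <= w2 -> w2 <= w1 -> 2^-1 <= y2 -> y2 <= y1 ->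
  island_mean w2 y2 <= island_mean w1 y1.
Proof. by move=> w2h w21 y2h y21; rewrite /island_mean; nra. Qed.

Definition reduced_step b phi w p : R * R := opinion_update b phi p.1 (island_mean w p.2).

Definition upper_half p : Prop := [/\ 2^-1 <= p.1, p.1 <= 1, 2^-1 <= p.2 & p.2 <= 1].

Definition state_le p q : Prop := p.1 <= q.1 /\ p.2 <= q.2.

Lemma reduced_step_upper_half b phi w p : 0 <= b -> 0 <= phi -> phi <= 1 ->
  2^-1 <= w -> w <= 1 -> upper_half p -> upper_half (reduced_step b phi w p).
Proof.
move=> b0 phi0 phi1 wh w1 [xh x1 yh y1].
have mh : 2^-1 <= island_mean w p.2 by apply: island_mean_ge.
have my : island_mean w p.2 <= p.2 by apply: island_mean_le.
have gm : island_mean w p.2 <= bias_update b p.1 (island_mean w p.2).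
  by apply: bias_update_ge; lra.
have g1 : bias_update b p.1 (island_mean w p.2) <= 1 by apply: bias_update_le1; lra.
by split => /=; nra.
Qed.

Lemma reduced_step_le_homo b1 b2 phi1 phi2 w1 w2 p1 p2 :
  0 < b2 -> b2 <= b1 -> 0 <= phi2 -> phi2 <= phi1 -> phi1 <= 1 ->
  2^-1 <= w2 -> w2 <= w1 -> w1 <= 1 ->
  upper_half p1 -> upper_half p2 -> state_le p2 p1 ->
  state_le (reduced_step b2 phi2 w2 p2) (reduced_step b1 phi1 w1 p1).
Proof.
move=> b20 b21 phi20 phi21 phi11 w2h w21 w11 [x1h x11 y1h y11] [x2h _ y2h _] [x21 y21].
set m1 := island_mean w1 p1.2; set m2 := island_mean w2 p2.2.
have m1h : 2^-1 <= m1 by apply: island_mean_ge; lra.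
have m2h : 2^-1 <= m2 by apply: island_mean_ge.
have m1y : m1 <= p1.2 by apply: island_mean_le.
have m21 : m2 <= m1 by apply: island_mean_le_homo.
have g1m : m1 <= bias_update b1 p1.1 m1 by apply: bias_update_ge; lra.
have g21 : bias_update b2 p2.1 m2 <= bias_update b1 p1.1 m1.
  by apply: bias_update_le_homo; lra.
by rewrite /state_le /= -/m1 -/m2; split; nra.
Qed.

Lemma iter_reduced_step_upper_half b phi w p t : 0 <= b -> 0 <= phi -> phi <= 1 ->
  2^-1 <= w -> w <= 1 -> upper_half p -> upper_half (iter t (reduced_step b phi w) p).
Proof. by move=> b0 phi0 phi1 wh w1 hp; elim: t => //= t; apply: reduced_step_upper_half. Qed.

Lemma iter_reduced_step_le_homo b1 b2 phi1 phi2 w1 w2 p1 p2 t :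
  0 < b2 -> b2 <= b1 -> 0 <= phi2 -> phi2 <= phi1 -> phi1 <= 1 ->
  2^-1 <= w2 -> w2 <= w1 -> w1 <= 1 ->
  upper_half p1 -> upper_half p2 -> state_le p2 p1 ->
  state_le (iter t (reduced_step b2 phi2 w2) p2) (iter t (reduced_step b1 phi1 w1) p1).
Proof.
move=> b20 b21 phi20 phi21 phi11 w2h w21 w11 hp1 hp2 hp21.
elim: t => //= t; apply: reduced_step_le_homo => //;
  by apply: iter_reduced_step_upper_half => //; lra.
Qed.

(* In terms of the homophily h = ps / pd, the weight is h / (1 + h). *)
Definition in_group_weight (ps pd : R) : R := ps / (ps + pd).

Lemma in_group_weight_ge ps pd : 0 < pd -> pd <= ps -> 2^-1 <= in_group_weight ps pd.
Proof. by move=> pd0 pdps; rewrite /in_group_weight ler_pdivlMr; lra. Qed.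

Lemma in_group_weight_le1 ps pd : 0 < pd -> pd <= ps -> in_group_weight ps pd <= 1.
Proof. by move=> pd0 pdps; rewrite /in_group_weight ler_pdivrMr; lra. Qed.

Lemma in_group_weight_le ps1 pd1 ps2 pd2 : 0 < ps1 -> 0 < pd1 -> 0 < ps2 -> 0 < pd2 ->
  ps2 / pd2 <= ps1 / pd1 -> in_group_weight ps2 pd2 <= in_group_weight ps1 pd1.
Proof.
move=> ps10 pd10 ps20 pd20; rewrite ler_pdivrMr // mulrAC ler_pdivlMr // => h.
by apply: ler_div_cross; lra.
Qed.
End ReducedDynamics.

Lemma step_at (R : realType) (V : finType) b phi (e : rel V) (xy : (V -> R) * (V -> R)) i :
  deg R e i != 0 ->
  ((step b phi e xy).1 i, (step b phi e xy).2 i) =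
  opinion_update b phi (xy.1 i) (ssum e xy.2 i / deg R e i).
Proof.
move=> d0; rewrite /step /opinion_update /bias_update /=.
set s := ssum e xy.2 i; set d := deg R e i.
set A := powR (xy.1 i) b; set B := powR (1 - xy.1 i) b.
have -> : A * s = A * (s / d) * d by field.
have -> : A * (s / d) * d + B * (d - s) = (A * (s / d) + B * (1 - s / d)) * d by field.
by rewrite -mulf_div divff // mulr1.
Qed.

Section TwoIsland.
Variables (R : realType) (V : finType).
Variables (n : nat) (ps pd : R) (V1 V2 : {set V}) (e : rel V).
Hypotheses (hnet : two_island n ps pd V1 V2 e) (hn : (0 < n)%N).
Hypotheses (pd_gt0 : 0 < pd) (pd_le_ps : pd <= ps).

Let psD_gt0 : 0 < ps + pd := addr_gt0 (lt_le_trans pd_gt0 pd_le_ps) pd_gt0.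

Definition two_valued (a : R) : V -> R := fun i => if i \in V1 then a else 1 - a.

Definition two_valued_state (p : R * R) : (V -> R) * (V -> R) := (two_valued p.1, two_valued p.2).

Lemma two_island_compl : V2 = ~: V1.
Proof.
have [_ _ [hI hU _ _] _ _] := hnet.
apply/setP => j; move/setP/(_ j): hI; move/setP/(_ j): hU.
by rewrite !inE; case: (j \in V1); case: (j \in V2).
Qed.

Lemma two_island_cards i :
  #|V1 :&: nbrs e i|%:R = n%:R * (if i \in V1 then ps else pd) /\
  #|~: V1 :&: nbrs e i|%:R = n%:R * (if i \in V1 then pd else ps).
Proof.
have [_ _ _ h1 h2] := hnet; rewrite two_island_compl in h1 h2.
case: (boolP (i \in V1)) => hi; first exact: h1.
by rewrite -in_setC in hi; have [-> ->] := h2 i hi.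
Qed.

Lemma two_island_ssum y i : ssum e (two_valued y) i =
  n%:R * ps * two_valued y i + n%:R * pd * (1 - two_valued y i).
Proof.
rewrite /ssum (big_setID V1).
rewrite (eq_bigr (fun=> y)) => [|j /setIP[_ hj]]; last by rewrite /two_valued hj.
rewrite [X in _ + X = _](eq_bigr (fun=> 1 - y)) => [|j /setDP[_ hj]]; last first.
  by rewrite /two_valued (negbTE hj).
rewrite !sumr_const -[y *+ _]mulr_natr -[(1 - y) *+ _]mulr_natr.
rewrite setDE !(setIC (nbrs e i)) /two_valued.
by have [-> ->] := two_island_cards i; case: (i \in V1); ring.
Qed.

Lemma two_island_deg i : deg R e i = n%:R * (ps + pd).
Proof.
rewrite /deg -(cardsID V1) natrD setDE !(setIC (nbrs e i)).
by have [-> ->] := two_island_cards i; case: (i \in V1); ring.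
Qed.

Lemma two_island_deg_neq0 i : deg R e i != 0.
Proof. by rewrite two_island_deg mulf_neq0 ?pnatr_eq0 -?lt0n // gt_eqF. Qed.

Lemma two_island_mean y i :
  ssum e (two_valued y) i / deg R e i = island_mean (in_group_weight ps pd) (two_valued y i).
Proof.
have n0 : n%:R != 0 :> R by rewrite pnatr_eq0 -lt0n.
rewrite two_island_ssum two_island_deg /island_mean /in_group_weight.
by field; rewrite n0 gt_eqF.
Qed.

Lemma step_two_valued_state b phi p : upper_half p ->
  step b phi e (two_valued_state p) =
  two_valued_state (reduced_step b phi (in_group_weight ps pd) p).
Proof.
move=> [xh _ yh y1].
have wh : 2^-1 <= in_group_weight ps pd by apply: in_group_weight_ge.
have w1 : in_group_weight ps pd <= 1 by apply: in_group_weight_le1.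
have mh := island_mean_ge wh yh.
have m1 := le_trans (island_mean_le w1 yh) y1.
set q := reduced_step _ _ _ p; set xy := step _ _ _ _.
have node i : (xy.1 i, xy.2 i) = (two_valued q.1 i, two_valued q.2 i).
  rewrite step_at ?two_island_deg_neq0 // two_island_mean /= /two_valued.
  by case: (i \in V1) => //; rewrite island_mean_compl opinion_update_compl //; lra.
by rewrite [xy]surjective_pairing; congr pair; apply: funext => i; case: (node i).
Qed.

Lemma traj_two_valued b phi x0 y0 t : 0 <= b -> 0 <= phi -> phi <= 1 -> upper_half (x0, y0) ->
  traj b phi e (two_valued x0) (two_valued y0) t =
  two_valued_state (iter t (reduced_step b phi (in_group_weight ps pd)) (x0, y0)).
Proof.
move=> b0 phi0 phi1 h0; elim: t => [|t IH] //.
rewrite /traj iterS -/(traj _ _ _ _ _ t) IH step_two_valued_state //.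
apply: iter_reduced_step_upper_half => //.
- exact: in_group_weight_ge.
- exact: in_group_weight_le1.
Qed.
End TwoIsland.

Theorem theorem5 (R : realType) (V : finType) (n : nat) (V1 V2 : {set V})
    (ps1 pd1 ps2 pd2 phi1 phi2 b1 b2 x0 y01 y02 : R) (e1 e2 : rel V)
    (hn : (1 <= n)%N)
    (hps1 : 0 < ps1 < 1) (hpd1 : 0 < pd1 < 1) (hpsd1 : pd1 < ps1)
    (hps2 : 0 < ps2 < 1) (hpd2 : 0 < pd2 < 1) (hpsd2 : pd2 < ps2)
    (hint1 : exists ms md : nat, (0 < ms)%N /\ (0 < md)%N /\
                n%:R * ps1 = ms%:R /\ n%:R * pd1 = md%:R)
    (hint2 : exists ms md : nat, (0 < ms)%N /\ (0 < md)%N /\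
                n%:R * ps2 = ms%:R /\ n%:R * pd2 = md%:R)
    (hnet1 : two_island n ps1 pd1 V1 V2 e1)
    (hnet2 : two_island n ps2 pd2 V1 V2 e2)
    (hphi1 : 0 < phi1 < 1) (hphi2 : 0 < phi2 < 1)
    (hb1 : 0 < b1) (hb2 : 0 < b2)
    (hx0 : 2^-1 < x0 < 1)
    (hy01 : 2^-1 <= y01 <= x0) (hy02 : 2^-1 <= y02 <= x0)
    (hy : y02 < y01) (hphi : phi2 < phi1) (hb : b2 < b1)
    (hh : ps2 / pd2 < ps1 / pd1) :
  let xinit := fun i : V => if i \in V1 then x0 else 1 - x0 in
  let yinit1 := fun i : V => if i \in V1 then y01 else 1 - y01 in
  let yinit2 := fun i : V => if i \in V1 then y02 else 1 - y02 in
  forall (t : nat) (i : V), (0 < t)%N -> i \in V1 ->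
    (traj b2 phi2 e2 xinit yinit2 t).1 i <= (traj b1 phi1 e1 xinit yinit1 t).1 i /\
    (traj b2 phi2 e2 xinit yinit2 t).2 i <= (traj b1 phi1 e1 xinit yinit1 t).2 i.
Proof.
move=> xinit yinit1 yinit2 t i _ hi.
move: hps1 hpd1 hps2 hpd2 => /andP[ps10 _] /andP[pd10 _] /andP[ps20 _] /andP[pd20 _].
move: hphi1 hphi2 hx0 hy01 hy02 => /andP[phi10 phi11] /andP[phi20 phi21] /andP[x0h x01].
move=> /andP[y01h y01x] /andP[y02h y02x].
have h01 : upper_half (x0, y01) by split => /=; lra.
have h02 : upper_half (x0, y02) by split => /=; lra.
rewrite /xinit /yinit1 /yinit2.
rewrite (traj_two_valued hnet1 hn pd10 (ltW hpsd1) t (ltW hb1) (ltW phi10) (ltW phi11) h01).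
rewrite (traj_two_valued hnet2 hn pd20 (ltW hpsd2) t (ltW hb2) (ltW phi20) (ltW phi21) h02).
rewrite /two_valued_state /two_valued /= hi.
have hw := in_group_weight_le ps10 pd10 ps20 pd20 (ltW hh).
apply: (iter_reduced_step_le_homo t hb2 (ltW hb) (ltW phi20) (ltW hphi) (ltW phi11)) => //.
- exact: in_group_weight_ge pd20 (ltW hpsd2).
- exact: in_group_weight_le1 pd10 (ltW hpsd1).
- by split => /=; lra.
Qed.
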